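(* For all $s,s_1,s_2\in\mathcal S$ the link velocities satisfy the reciprocity relation $$\vec\beta(s,s_2,s_1)=-\,\vec\beta(s,s_1,s_2)$$ in $T_s\mathcal S$.
   Context: $V$ is a 4-dimensional real vector space with a symmetric non-degenerate bilinear form $\eta$ of signature $(-,+,+,+)$; $\mathcal S$ is one fixed connected component of $\{v\in V:\eta(v,v)=-1\}$; $T_s\mathcal S:=\{u\in V:\eta(u,s)=0\}$. With $(u\otimes v)(w):=\eta(v,w)u$, for $s\in\mathcal S$ and $\vec\beta\in T_s\mathcal S$ with $\beta^2=\eta(\vec\beta,\vec\beta)<1$, $\beta>0$, $\vec n=\vec\beta/\beta$, $\gamma=(1-\beta^2)^{-1/2}$, the boost relative to $s$ is $B(s,\vec\beta)=\mathrm{id}_V+(\gamma-1)(-s\otimes s+\vec n\otimes\vec n)+\beta\gamma(s\otimes\vec n-\vec n\otimes s)$, $B(s,0)=\mathrm{id}_V$. The link velocity $\vec\beta(s,s_1,s_2)$ of $s_2$ against $s_1$ relative to $s$ is the unique $\vec\beta\in T_s\mathcal S$ of $\eta$-norm $<1$ with $B(s,\vec\beta)s_1=s_2$. *)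

From HB Require Import structures.
From mathcomp Require Import all_boot all_order all_algebra.
From mathcomp Require Import all_classical all_reals all_analysis.
Set Implicit Arguments. Unset Strict Implicit. Unset Printing Implicit Defensive.
Import Order.TTheory GRing.Theory Num.Theory.
Import numFieldNormedType.Exports.
Local Open Scope ring_scope.
Local Open Scope classical_set_scope.

(* V is modelled as 'rV[R]_4 (every 4-dim real vector space is linearly
   isomorphic to it, with its canonical topology); the bilinear form eta is
   given by its Gram matrix G: eta u v = u G v^T. *)
Section Minkowski.
Variable R : realType.
Notation V := 'rV[R]_4.

Definition eta (G : 'M[R]_4) (u v : V) : R := (u *m G *m v^T) 0 0.

Definition minkowski_diag : 'M[R]_4 :=
  diag_mx (\row_(i < 4) (if i == 0%N :> nat then -1 else 1)).

(* symmetric, non-degenerate, signature (-,+,+,+): there is a basis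
   (rows of an invertible P) in which the Gram matrix is diag(-1,1,1,1). *)
Definition lorentzian (G : 'M[R]_4) : Prop :=
  G^T = G /\ G \in unitmx /\
  exists P : 'M[R]_4, P \in unitmx /\ P *m G *m P^T = minkowski_diag.

Definition hyperboloid (G : 'M[R]_4) : set V := [set v | eta G v v = -1].

Definition is_sheet (G : 'M[R]_4) (S : set V) : Prop :=
  exists s0, hyperboloid G s0 /\ S = connected_component (hyperboloid G) s0.

Definition tangent (G : 'M[R]_4) (s : V) : set V := [set u | eta G u s = 0].

(* (u ⊗ v)(w) := eta(v,w) u ; boost B(s, beta) applied to w *)
Definition boost (G : 'M[R]_4) (s b : V) (w : V) : V :=
  if b == 0 then w else
  let bt := Num.sqrt (eta G b b) in
  let n := bt^-1 *: b in
  let g := Num.sqrt ((1 - bt ^+ 2)^-1) in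
  w + (g - 1) *: (- (eta G s w *: s) + eta G n w *: n)
    + (bt * g) *: (eta G n w *: s - eta G s w *: n).

Definition is_link_velocity (G : 'M[R]_4) (s s1 s2 b : V) : Prop :=
  tangent G s b /\ eta G b b < 1 /\ boost G s b s1 = s2.

Definition link_velocity (G : 'M[R]_4) (s s1 s2 : V) : V :=
  xget 0 [set b | is_link_velocity G s s1 s2 b].

End Minkowski.

From Pilot Require Import Defs.
From HB Require Import structures.
From mathcomp Require Import all_boot all_order all_algebra.
From mathcomp Require Import all_classical all_reals all_analysis.
From mathcomp Require Import ring lra.
Import Order.TTheory GRing.Theory Num.Theory.
Import numFieldNormedType.Exports.
Set Implicit Arguments.
Unset Strict Implicit.
Unset Printing Implicit Defensive.
Local Open Scope ring_scope.
Local Open Scope classical_set_scope.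

(* The boost B(s, b) acts on the plane spanned by s and the unit
   direction n of b as a hyperbolic rotation, and trivially on the
   eta-orthogonal complement of that plane; B(s, -b) rotates back, so -b is a
   link velocity of s1 against s2 whenever b is one of s2 against s1.  What
   remains is uniqueness: as eta is positive definite on T_s, a link velocity
   b = tanh(th) n is determined by s1 and s2.  Indeed, projecting s2 - s1 onto
   T_s and dividing by -eta(s, s1 + s2) gives tanh(th/2) n, and the
   double-angle formula for tanh recovers b.  When no link velocity exists,
   both sides of the identity are the default value 0. *)

(* [HB.structures] also exports a constant named [eta]. *)
Local Notation eta := Defs.eta.

Lemma minkowski_tangent_bound {R : realFieldType} (s0 s1 s2 s3 u0 u1 u2 u3 : R) :
  - (s0 * s0) + s1 * s1 + s2 * s2 + s3 * s3 = -1 ->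
  - (u0 * s0) + u1 * s1 + u2 * s2 + u3 * s3 = 0 ->
  u1 * u1 + u2 * u2 + u3 * u3 <=
    s0 * s0 * (- (u0 * u0) + u1 * u1 + u2 * u2 + u3 * u3).
Proof.
move=> hs hus.
have lagrange : s0 * s0 * (- (u0 * u0) + u1 * u1 + u2 * u2 + u3 * u3) =
    u1 * u1 + u2 * u2 + u3 * u3 + (u1 * s2 - u2 * s1) ^+ 2
    + (u1 * s3 - u3 * s1) ^+ 2 + (u2 * s3 - u3 * s2) ^+ 2.
  transitivity (s0 * s0 * (u1 * u1 + u2 * u2 + u3 * u3) - (u0 * s0) ^+ 2).
    by ring.
  have -> : u0 * s0 = u1 * s1 + u2 * s2 + u3 * s3 by lra.
  have -> : s0 * s0 = 1 + s1 * s1 + s2 * s2 + s3 * s3 by lra.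
  by ring.
rewrite lagrange.
have := sqr_ge0 (u1 * s2 - u2 * s1); have := sqr_ge0 (u1 * s3 - u3 * s1).
have := sqr_ge0 (u2 * s3 - u3 * s2); lra.
Qed.

Lemma half_boost_ratio {R : realFieldType} (t g A P : R) :
  0 < g -> (t * g) ^+ 2 = g ^+ 2 - 1 -> 1 + P ^+ 2 <= A ^+ 2 ->
  ((g - 1) * P - t * g * A) / (t * g * P - (g + 1) * A) = t * g / (g + 1).
Proof.
move=> g_gt0 tg2 hAP.
have g1_neq0 : g + 1 != 0 by rewrite lt0r_neq0 // addr_gt0.
have den_neq0 : t * g * P - (g + 1) * A != 0.
  apply/eqP => /eqP; rewrite subr_eq0 => /eqP htgP.
  have : ((g + 1) * A) ^+ 2 = (g ^+ 2 - 1) * P ^+ 2 by rewrite -htgP exprMn tg2.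
  rewrite exprMn; move: hAP g_gt0; rewrite !expr2 => hAP g_gt0 h; nra.
apply/eqP; rewrite eqr_div //; apply/eqP.
transitivity ((t * g) ^+ 2 * P - t * g * (g + 1) * A); last by ring.
by rewrite tg2; ring.
Qed.

Lemma double_half_speed {R : realFieldType} (t g : R) :
  0 < g -> (t * g) ^+ 2 = g ^+ 2 - 1 ->
  2 / (1 + (t * g / (g + 1)) ^+ 2) * (t * g / (g + 1)) = t.
Proof.
move=> g_gt0 tg2.
have g_neq0 : g != 0 by rewrite lt0r_neq0.
have g1_neq0 : g + 1 != 0 by rewrite lt0r_neq0 // addr_gt0.
have -> : 1 + (t * g / (g + 1)) ^+ 2 = 2 * g / (g + 1).
  by rewrite expr_div_n tg2; field; rewrite g1_neq0.
by field; rewrite g1_neq0.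
Qed.

Section BilinearForm.
Variable R : realType.
Implicit Types (G : 'M[R]_4) (u v w : 'rV[R]_4).

Lemma etaDl G u v w : eta G (u + v) w = eta G u w + eta G v w.
Proof. by rewrite /Defs.eta !mulmxDl mxE. Qed.

Lemma etaZl G k u w : eta G (k *: u) w = k * eta G u w.
Proof. by rewrite /Defs.eta -!scalemxAl mxE. Qed.

Lemma etaNl G u w : eta G (- u) w = - eta G u w.
Proof. by rewrite -scaleN1r etaZl mulN1r. Qed.

Lemma etaDr G u v w : eta G w (u + v) = eta G w u + eta G w v.
Proof. by rewrite /Defs.eta linearD /= !mulmxDr mxE. Qed.

Lemma etaZr G k u w : eta G w (k *: u) = k * eta G w u.
Proof. by rewrite /Defs.eta linearZ /= -!scalemxAr mxE. Qed.

Lemma etaNr G u w : eta G w (- u) = - eta G w u.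
Proof. by rewrite -scaleN1r etaZr mulN1r. Qed.

Lemma eta0r G w : eta G w 0 = 0.
Proof. by rewrite -(scale0r 0) etaZr mul0r. Qed.

Definition etaE := (etaDl, etaDr, etaZl, etaZr, etaNl, etaNr).

Lemma etaC G u v : G^T = G -> eta G u v = eta G v u.
Proof.
move=> symG; rewrite /Defs.eta.
transitivity ((u *m G *m v^T)^T 0 0); first by rewrite [RHS]mxE.
by rewrite !trmx_mul trmxK symG mulmxA.
Qed.

Lemma eta_minkowski_diag u v : eta (minkowski_diag R) u v =
  - (u 0 0 * v 0 0) + u 0 1 * v 0 1 + u 0 2%:R * v 0 2%:R + u 0 3%:R * v 0 3%:R.
Proof.
rewrite /Defs.eta /minkowski_diag mul_mx_diag !mxE !big_ord_recl big_ord0 !mxE /=.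
have -> : (lift ord0 ord0 : 'I_4) = 1 by apply/val_inj.
have -> : (lift ord0 (lift ord0 ord0) : 'I_4) = 2%:R by apply/val_inj.
have -> : (lift ord0 (lift ord0 (lift ord0 ord0)) : 'I_4) = 3%:R by apply/val_inj.
by ring.
Qed.

Lemma minkowski_tangent_gt0 s u :
  eta (minkowski_diag R) s s = -1 -> eta (minkowski_diag R) u s = 0 -> u != 0 ->
  0 < eta (minkowski_diag R) u u.
Proof.
rewrite !eta_minkowski_diag => hs hus; apply: contraNT; rewrite -leNgt => hle.
have hb := minkowski_tangent_bound hs hus.
have u_spatial : [/\ u 0 1 = 0, u 0 2%:R = 0 & u 0 3%:R = 0].
  have s00_ge0 := mulr_ge0 (sqr_ge0 (s 0 0)) (sqr_ge0 (s 0 0)).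
  have := sqr_ge0 (u 0 1); have := sqr_ge0 (u 0 2%:R); have := sqr_ge0 (u 0 3%:R).
  rewrite !expr2 => h1 h2 h3.
  have : u 0 1 * u 0 1 + u 0 2%:R * u 0 2%:R + u 0 3%:R * u 0 3%:R <= 0 by nra.
  by split; apply/eqP; rewrite -sqrf_eq0 expr2 eq_le; apply/andP; split; lra.
case: u_spatial => u1 u2 u3.
have s0_neq0 : s 0 0 != 0.
  apply/eqP => s0; move: hs; rewrite s0; have := sqr_ge0 (s 0 1).
  have := sqr_ge0 (s 0 2%:R); have := sqr_ge0 (s 0 3%:R); rewrite !expr2; lra.
have u0 : u 0 0 = 0.
  have /eqP : u 0 0 * s 0 0 = 0 by move: hus; rewrite u1 u2 u3; lra.
  by rewrite mulf_eq0 (negbTE s0_neq0) orbF => /eqP.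
apply/eqP/rowP => i; rewrite mxE.
by case: i => -[|[|[|[|//]]]] hi; [rewrite -u0|rewrite -u1|rewrite -u2|rewrite -u3];
  congr (u _ _); apply/val_inj.
Qed.

Lemma lorentzian_sym G : lorentzian G -> G^T = G.
Proof. by case. Qed.

Lemma lorentzian_diag G : lorentzian G -> exists2 Q : 'M[R]_4, Q \in unitmx &
  forall u v, eta G u v = eta (minkowski_diag R) (u *m Q) (v *m Q).
Proof.
case=> _ [_ [P [P_unit PGPt]]]; exists (invmx P); first by rewrite unitmx_inv.
have -> : G = invmx P *m minkowski_diag R *m (invmx P)^T.
  by rewrite -PGPt !mulmxA mulVmx // mul1mx -mulmxA -trmx_mul mulVmx // trmx1 mulmx1.
by move=> u v; rewrite /Defs.eta trmx_mul !mulmxA.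
Qed.

End BilinearForm.

Section Boost.
Variable R : realType.
Implicit Types (G : 'M[R]_4) (s n b x : 'rV[R]_4) (t g : R).

Definition speed G b := Num.sqrt (eta G b b).
Definition lorentz_factor G b := Num.sqrt ((1 - speed G b ^+ 2)^-1).
Definition direction G b := (speed G b)^-1 *: b.

Definition plane_boost G s n t g x := x
  + ((1 - g) * eta G s x + t * g * eta G n x) *: s
  + ((g - 1) * eta G n x - t * g * eta G s x) *: n.

Lemma boost0 G s x : boost G s 0 x = x.
Proof. by rewrite /boost eqxx. Qed.

Lemma boostE G s b x : b != 0 ->
  boost G s b x = plane_boost G s (direction G b) (speed G b) (lorentz_factor G b) x.
Proof.
move=> b_neq0; rewrite /boost (negbTE b_neq0) /plane_boost.
by rewrite /lorentz_factor /direction /speed /=; apply/rowP => i; rewrite !mxE; ring.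
Qed.

Lemma speedN G b : speed G (- b) = speed G b.
Proof. by rewrite /speed etaNl etaNr opprK. Qed.

Lemma lorentz_factorN G b : lorentz_factor G (- b) = lorentz_factor G b.
Proof. by rewrite /lorentz_factor speedN. Qed.

Lemma directionN G b : direction G (- b) = - direction G b.
Proof. by rewrite /direction speedN scalerN. Qed.

(* The eta-orthogonal projection onto T_s, given eta s s = -1. *)
Definition tangent_proj G s x := x + eta G s x *: s.

Definition half_velocity G s (s1 s2 : 'rV[R]_4) :=
  (- eta G s (s1 + s2))^-1 *: tangent_proj G s (s2 - s1).

Definition link_velocity_of G s (s1 s2 : 'rV[R]_4) :=
  let m := half_velocity G s s1 s2 in (2 / (1 + eta G m m)) *: m.

End Boost.

Section PlaneBoost.
Variables (R : realType) (G : 'M[R]_4) (s n : 'rV[R]_4) (t g : R).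
Hypotheses (hs : eta G s s = -1) (hn : eta G n n = 1).
Hypotheses (hsn : eta G s n = 0) (hns : eta G n s = 0).
Hypotheses (g_gt0 : 0 < g) (tg2 : (t * g) ^+ 2 = g ^+ 2 - 1).

Lemma plane_boostNK x : plane_boost G s (- n) t g (plane_boost G s n t g x) = x.
Proof.
rewrite /plane_boost !etaE hs hsn hn hns.
set A := eta G s x; set P := eta G n x.
transitivity (x + (A * ((t * g) ^+ 2 - (g ^+ 2 - 1))) *: s
                + (P * ((g ^+ 2 - 1) - (t * g) ^+ 2)) *: n).
  by apply/rowP => i; rewrite !mxE; ring.
by rewrite tg2 subrr !mulr0 !scale0r !addr0.
Qed.

Lemma half_velocity_plane_boost x : 1 + eta G n x ^+ 2 <= eta G s x ^+ 2 ->
  half_velocity G s x (plane_boost G s n t g x) = (t * g / (g + 1)) *: n.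
Proof.
rewrite /half_velocity /tangent_proj /plane_boost !etaE hs hsn.
set A := eta G s x; set P := eta G n x => bound.
transitivity ((t * g * P - (g + 1) * A)^-1 *: (((g - 1) * P - t * g * A) *: n)).
  by congr (_^-1 *: _); [ring | apply/rowP => i; rewrite !mxE; ring].
by rewrite scalerA mulrC half_boost_ratio.
Qed.

Lemma link_velocity_of_plane_boost x : 1 + eta G n x ^+ 2 <= eta G s x ^+ 2 ->
  link_velocity_of G s x (plane_boost G s n t g x) = t *: n.
Proof.
move=> bound; rewrite /link_velocity_of half_velocity_plane_boost //.
by rewrite etaZl etaZr hn mulr1 scalerA -expr2 double_half_speed.
Qed.

End PlaneBoost.

Section Lorentzian.
Variables (R : realType) (G : 'M[R]_4) (s : 'rV[R]_4).
Hypotheses (lorG : lorentzian G) (hs : eta G s s = -1).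

Lemma tangent_eta_gt0 u : eta G u s = 0 -> u != 0 -> 0 < eta G u u.
Proof.
have [Q Q_unit etaQ] := lorentzian_diag lorG.
move=> hus u_neq0; rewrite etaQ; apply: (minkowski_tangent_gt0 (s := s *m Q)).
- by rewrite -etaQ.
- by rewrite -etaQ.
- by apply: contraNneq u_neq0 => uQ0; rewrite -(mulmxK Q_unit u) uQ0 mul0mx.
Qed.

Lemma tangent_eta_ge0 u : eta G u s = 0 -> 0 <= eta G u u.
Proof.
move=> hus; have [->|u_neq0] := eqVneq u 0; first by rewrite eta0r.
exact/ltW/tangent_eta_gt0.
Qed.

Lemma eta_tangent_unit_bound e x : eta G x x = -1 -> eta G e s = 0 ->
  eta G e e = 1 -> 1 + eta G e x ^+ 2 <= eta G s x ^+ 2.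
Proof.
move=> hx hes hee; have symG := lorentzian_sym lorG.
rewrite (etaC e x symG) (etaC s x symG).
(* The part of x that is eta-orthogonal to s and e has squared norm
   eta(s, x)^2 - eta(e, x)^2 - 1. *)
have tangent_v : eta G (x + eta G x s *: s - eta G x e *: e) s = 0.
  by rewrite !etaE hs hes; ring.
have := tangent_eta_ge0 tangent_v.
rewrite !etaE hx hs hee hes (etaC s x symG) (etaC e x symG) (etaC s e symG) hes.
by rewrite !expr2 => h; lra.
Qed.

Section Velocity.
Variable b : 'rV[R]_4.
Hypotheses (hbs : eta G b s = 0) (b_neq0 : b != 0) (hbb : eta G b b < 1).

Lemma speed_gt0 : 0 < speed G b.
Proof. by rewrite sqrtr_gt0 tangent_eta_gt0. Qed.

Lemma speed_sqr : speed G b ^+ 2 = eta G b b.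
Proof. by rewrite sqr_sqrtr // tangent_eta_ge0. Qed.

Lemma lorentz_factor_gt0 : 0 < lorentz_factor G b.
Proof. by rewrite sqrtr_gt0 invr_gt0 subr_gt0 speed_sqr. Qed.

Lemma speed_lorentz_factor_sqr :
  (speed G b * lorentz_factor G b) ^+ 2 = lorentz_factor G b ^+ 2 - 1.
Proof.
have gap : 0 < 1 - speed G b ^+ 2 by rewrite subr_gt0 speed_sqr.
rewrite exprMn /lorentz_factor sqr_sqrtr ?invr_ge0 ?ltW //.
by field; rewrite lt0r_neq0.
Qed.

Lemma direction_tangent : eta G (direction G b) s = 0.
Proof. by rewrite etaZl hbs mulr0. Qed.

Lemma tangent_direction : eta G s (direction G b) = 0.
Proof. by rewrite (etaC _ _ (lorentzian_sym lorG)) direction_tangent. Qed.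

Lemma direction_unit : eta G (direction G b) (direction G b) = 1.
Proof. by rewrite etaZl etaZr -speed_sqr; field; rewrite lt0r_neq0 // speed_gt0. Qed.

Lemma scale_direction : speed G b *: direction G b = b.
Proof. by rewrite scalerA mulfV ?scale1r // lt0r_neq0 // speed_gt0. Qed.

Lemma boostNK_neq0 x : boost G s (- b) (boost G s b x) = x.
Proof.
rewrite boostE ?oppr_eq0 // speedN lorentz_factorN directionN boostE //.
exact: plane_boostNK hs direction_unit tangent_direction direction_tangent
  speed_lorentz_factor_sqr _.
Qed.

Lemma link_velocity_of_boost_neq0 x : eta G x x = -1 ->
  link_velocity_of G s x (boost G s b x) = b.
Proof.
move=> hx; rewrite boostE // link_velocity_of_plane_boost ?scale_direction //.
- exact: direction_unit.
- exact: tangent_direction.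
- exact: lorentz_factor_gt0.
- exact: speed_lorentz_factor_sqr.
- exact: eta_tangent_unit_bound hx direction_tangent direction_unit.
Qed.

End Velocity.

Lemma boostNK b x : eta G b s = 0 -> eta G b b < 1 -> boost G s (- b) (boost G s b x) = x.
Proof.
move=> hbs hbb; have [->|b_neq0] := eqVneq b 0; first by rewrite oppr0 !boost0.
exact: boostNK_neq0.
Qed.

Lemma link_velocity_of_boost b x : eta G b s = 0 -> eta G b b < 1 ->
  eta G x x = -1 -> link_velocity_of G s x (boost G s b x) = b.
Proof.
move=> hbs hbb hx; have [->|b_neq0] := eqVneq b 0; last exact: link_velocity_of_boost_neq0.
by rewrite boost0 /link_velocity_of /half_velocity /tangent_proj subrr eta0r scale0r addr0 !scaler0.
Qed.

Lemma is_link_velocity_opp s1 s2 b :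
  is_link_velocity G s s1 s2 b -> is_link_velocity G s s2 s1 (- b).
Proof.
case=> hbs [hbb <-]; split; [|split].
- by rewrite /tangent /= etaNl hbs oppr0.
- by rewrite etaNl etaNr opprK.
- exact: boostNK.
Qed.

Lemma link_velocity_eq s1 s2 b : eta G s1 s1 = -1 ->
  is_link_velocity G s s1 s2 b -> link_velocity G s s1 s2 = b.
Proof.
move=> hs1 lv_b.
have lv_uniq b' : is_link_velocity G s s1 s2 b' -> b' = link_velocity_of G s s1 s2.
  by case=> hbs [hbb <-]; rewrite link_velocity_of_boost.
rewrite /link_velocity (xget_unique 0 lv_b) // => b' /lv_uniq ->.
by rewrite (lv_uniq _ lv_b).
Qed.

End Lorentzian.

Lemma sheet_hyperboloid (R : realType) (G : 'M[R]_4) (S : set 'rV[R]_4) x :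
  is_sheet G S -> S x -> eta G x x = -1.
Proof. by case=> s0 [_ ->] /connected_component_sub. Qed.

Theorem mainTheorem5 (R : realType) (G : 'M[R]_4) (S : set 'rV[R]_4)
  (hG : lorentzian G) (hS : is_sheet G S) (s s1 s2 : 'rV[R]_4) :
  S s -> S s1 -> S s2 ->
  link_velocity G s s2 s1 = - link_velocity G s s1 s2.
Proof.
move=> Ss Ss1 Ss2; have onH := sheet_hyperboloid hS.
have lv_opp := is_link_velocity_opp hG (onH _ Ss).
have [[b lv_b]|no_lv] := pselect (exists b, is_link_velocity G s s1 s2 b).
  rewrite (link_velocity_eq hG (onH _ Ss) (onH _ Ss1) lv_b).
  exact: (link_velocity_eq hG (onH _ Ss) (onH _ Ss2) (lv_opp _ _ _ lv_b)).
rewrite /link_velocity !xgetPN ?oppr0 // => b lv_b; apply: no_lv.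
- by exists b.
- by exists (- b); exact: lv_opp.
Qed.
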